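(* Let $\mathcal{E}=(\mathbf{R},\mathbf{S},\Sigma_{st},\mathbf{F})$ be a constructive relational to RDF data exchange setting in which every st-tgd head is a single atom, with $\mathbf{R}=(\mathcal{R},\Sigma_{fd})$ and $\mathbf{S}=(\mathcal{T},\delta)$. For any $(T,f)\in\mathcal{T}\times\mathcal{F}$: $(T,f)$ is accessible in $\mathcal{E}$ if and only if there exist an instance $I$ of $\mathcal{R}$ (not necessarily satisfying $\Sigma_{fd}$) and a tuple $\bar a$ of constants in the active domain of $I$ such that the core pre-solution for $I$ to $\mathcal{E}$ contains the fact $T(f^F(\bar a))$.
   Context: Values: $\mathsf{Iri}$ (IRIs, containing predicates $\mathsf{Pred}$), $\mathsf{NullIri}$, $\mathsf{Lit}$ with null literals $\mathsf{NullLit}\subseteq\mathsf{Lit}$; non-null values are constants. $\mathbf{R}=(\mathcal{R},\Sigma_{fd})$: relation names with arities and functional dependencies; an instance of $\mathcal{R}$ assigns finite sets of tuples of non-null literals to relation names. A deterministic shape schema $\mathbf{S}=(\mathcal{T},\delta)$ has a partial function $\delta:\mathcal{T}\times\mathsf{Pred}\to(\mathcal{T}\cup\{\mathit{Literal}\})\times\{1,?,*,+\}$, written $\delta(T,p)=S^\mu$. An IRI constructor library $\mathbf{F}=(\mathcal{F},F)$ interprets each $n$-ary $f\in\mathcal{F}$ as $f^F:\mathsf{Lit}^n\to\mathsf{Iri}$ (constants); constructive means: ranges of distinct constructors are disjoint and all st-tgds are full, of the form $\forall\bar x.\,\varphi\Rightarrow\psi$ with $\varphi$ a conjunction of atoms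 over $\mathcal{R}$ and $\psi$ an atom $\mathit{Triple}(t_1,p,t_2)$ ($p\in\mathsf{Pred}$), $T(t)$ or $\mathit{Literal}(t)$, with terms variables or $f(\bar u)$ for a tuple of variables $\bar u$. The core pre-solution of $I$ is the least set $J_0$ of facts containing, for every st-tgd and every assignment $g$ of its variables making its body true in $I$, the head atom with terms evaluated ($f(\bar u)\mapsto f^F(g(\bar u))$), and closed under: $T(a),\mathit{Triple}(a,p,b)\in J_0$ and $\delta(T,p)=S^\mu$ imply $S(b)\in J_0$. $(T,f)$ is accessible in $\mathcal{E}$ (with the sequence $\sigma_0,\dots,\sigma_n$ of st-tgds) if there are types $T_0,\dots,T_n$, constructors $f_0,\dots,f_n$, predicates $p_1,\dots,p_n$ and tuples of variables $\bar x_i,\bar y_i$ such that the head of $\sigma_0$ is $T_0(f_0(\bar y_0))$, the head of $\sigma_i$ is $\mathit{Triple}(f_{i-1}(\bar x_i),p_i,f_i(\bar y_i))$ for $1\le i\le n$, $\delta(T_{i-1},p_i)=T_i^{\mu_i}$ for some $\mu_i$ for $1\le i\le n$, and $T=T_n$, $f=f_n$.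
   Formalization: In every st-tgd, the term t of a head T(t) and the subject t₁ of a head Triple(t₁,p,t₂) are constructor terms f(ū), never variables. The paper assumes this as well. *)

From Stdlib Require Import List.
Import ListNotations.
Set Implicit Arguments.

Inductive mult : Type := MOne | MOpt | MStar | MPlus.

Inductive shape_target (TName : Type) : Type :=
  | STType (S : TName)
  | STLiteral.
Arguments STType {TName}.
Arguments STLiteral {TName}.

Inductive term (FName : Type) : Type :=
  | TVar (x : nat)
  | TFun (f : FName) (us : list nat).
Arguments TVar {FName}.
Arguments TFun {FName}.

Inductive head_atom (Pred TName FName : Type) : Type :=
  | HTriple (t1 : term FName) (p : Pred) (t2 : term FName)
  | HType (T : TName) (t : term FName)
  | HLiteral (t : term FName).
Arguments HTriple {Pred TName FName}.
Arguments HType {Pred TName FName}.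
Arguments HLiteral {Pred TName FName}.

(** Full st-tgd  forall xs. body => head  (body a conjunction of relational atoms
    R(x1..xk), variables are natural numbers). *)
Record tgd (RName Pred TName FName : Type) : Type := mkTgd {
  body : list (RName * list nat);
  head : head_atom Pred TName FName
}.

Record setting : Type := mkSetting {
  Iri : Type;
  Lit : Type;
  Pred : Type;
  pred_iri : Pred -> Iri;             (* Pred is a subset of Iri *)
  NullIri : Iri -> Prop;
  NullLit : Lit -> Prop;
  RName : Type;
  rarity : RName -> nat;
  fds : list (RName * list nat * list nat);  (* R : X -> Y, positions *)
  TName : Type;
  delta : TName -> Pred -> option (shape_target TName * mult);
  FName : Type;
  farity : FName -> nat;
  finterp : FName -> list Lit -> Iri;
  stgds : list (tgd RName Pred TName FName)
}.

Section Defs.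
Variable E : setting.

Inductive value : Type :=
  | VIri (i : Iri E)
  | VLit (l : Lit E).

Inductive fact : Type :=
  | FTriple (a : value) (p : Pred E) (b : value)
  | FType (T : TName E) (a : value)
  | FLiteral (a : value).

(** An instance of the relational schema: finitely many tuples of non-null
    literals of the right arity per relation name (functional dependencies
    are NOT required). *)
Record instance : Type := mkInstance { rel : RName E -> list (list (Lit E)) }.

Definition wf_instance (I : instance) : Prop :=
  forall R t, In t (rel I R) ->
    length t = rarity E R /\ Forall (fun l => ~ NullLit E l) t.

Definition adom (I : instance) (l : Lit E) : Prop :=
  exists R t, In t (rel I R) /\ In l t.

Definition term_vars (t : term (FName E)) : list nat :=
  match t with TVar x => [x] | TFun f us => us end.

Definition head_vars (h : head_atom (Pred E) (TName E) (FName E)) : list nat :=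
  match h with
  | HTriple t1 _ t2 => term_vars t1 ++ term_vars t2
  | HType _ t => term_vars t
  | HLiteral t => term_vars t
  end.

Definition is_fun_term (t : term (FName E)) : Prop :=
  match t with TFun _ _ => True | TVar _ => False end.

Definition constructive : Prop :=
  (forall f args, length args = farity E f -> ~ NullIri E (finterp E f args)) /\
  (forall f g a b, f <> g -> length a = farity E f -> length b = farity E g ->
       finterp E f a <> finterp E g b) /\
  (forall s, In s (stgds E) -> forall x, In x (head_vars (head s)) ->
       exists A, In A (body s) /\ In x (snd A)).

Definition wf_term (t : term (FName E)) : Prop :=
  match t with TVar _ => True | TFun f us => length us = farity E f end.

Definition wf_head (h : head_atom (Pred E) (TName E) (FName E)) : Prop :=
  match h with
  | HTriple t1 _ t2 => wf_term t1 /\ wf_term t2 /\ is_fun_term t1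
  | HType _ t => wf_term t /\ is_fun_term t
  | HLiteral t => wf_term t
  end.

Definition wf_setting : Prop :=
  (exists c : Lit E, ~ NullLit E c) /\
  (forall s, In s (stgds E) ->
     wf_head (head s) /\
     (forall A, In A (body s) -> length (snd A) = rarity E (fst A))).

Definition eval_term (g : nat -> Lit E) (t : term (FName E)) : value :=
  match t with
  | TVar x => VLit (g x)
  | TFun f us => VIri (finterp E f (map g us))
  end.

Definition eval_head (g : nat -> Lit E) (h : head_atom (Pred E) (TName E) (FName E)) : fact :=
  match h with
  | HTriple t1 p t2 => FTriple (eval_term g t1) p (eval_term g t2)
  | HType T t => FType T (eval_term g t)
  | HLiteral t => FLiteral (eval_term g t)
  end.

Definition body_true (I : instance) (g : nat -> Lit E) (b : list (RName E * list nat)) : Prop :=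
  forall A, In A b -> In (map g (snd A)) (rel I (fst A)).

Inductive core_presol (I : instance) : fact -> Prop :=
  | cp_tgd : forall s g, In s (stgds E) -> body_true I g (body s) ->
      core_presol I (eval_head g (head s))
  | cp_type : forall T a p b S mu,
      core_presol I (FType T a) -> core_presol I (FTriple a p b) ->
      delta E T p = Some (STType S, mu) -> core_presol I (FType S b)
  | cp_lit : forall T a p b mu,
      core_presol I (FType T a) -> core_presol I (FTriple a p b) ->
      delta E T p = Some (STLiteral, mu) -> core_presol I (FLiteral b).

(** Accessibility of (T,f): existence of a chain sigma_0, ..., sigma_n of
    st-tgds as in the paper, given inductively by its length. *)
Inductive accessible : TName E -> FName E -> Prop :=
  | acc_base : forall s T f ys,
      In s (stgds E) -> head s = HType T (TFun f ys) -> accessible T f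
  | acc_step : forall s T f xs p T' f' ys mu,
      accessible T f ->
      In s (stgds E) -> head s = HTriple (TFun f xs) p (TFun f' ys) ->
      delta E T p = Some (STType T', mu) ->
      accessible T' f'.

End Defs.
Arguments VIri {E}.
Arguments VLit {E}.
Arguments FTriple {E}.
Arguments FType {E}.
Arguments FLiteral {E}.
Arguments mkInstance {E}.

(* Soundness: a fact T(f(a)) of the core pre-solution is produced either directly by an st-tgd
   with head T(f(..)), or by propagating a type along a triple whose object is f(..); since
   triples are only produced by st-tgds and distinct constructors have disjoint ranges, the
   derivation of T(f(a)) unfolds into an accessibility chain ending in (T, f).
   Completeness: in the instance holding the single all-c tuple in every relation, every
   st-tgd fires under the constant assignment, so every accessibility chain is replayed in
   the core pre-solution, with a = (c, ..., c); fullness of the st-tgds puts c in the active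
   domain as soon as f has a positive arity. *)

From Pilot Require Import Defs.
From Stdlib Require Import List Classical.
Import ListNotations.

Lemma Forall_repeat {A : Type} (P : A -> Prop) x n : P x -> Forall P (repeat x n).
Proof. intro Hx. induction n; simpl; auto. Qed.

Lemma wf_setting_head {E : setting} (Hwf : wf_setting E) {s} :
  In s (stgds E) -> wf_head E (Defs.head s).
Proof. intro Hs. exact (proj1 (proj2 Hwf s Hs)). Qed.

Lemma wf_setting_body {E : setting} (Hwf : wf_setting E) {s A} :
  In s (stgds E) -> In A (body s) -> length (snd A) = rarity E (fst A).
Proof. intros Hs HA. exact (proj2 (proj2 Hwf s Hs) A HA). Qed.

Section Soundness.
Context {E : setting}.
Hypothesis Hc : constructive E.
Hypothesis Hwf : wf_setting E.

Lemma finterp_constructor_inj f g a b :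
  length a = farity E f -> length b = farity E g ->
  finterp E f a = finterp E g b -> f = g.
Proof.
  intros Ha Hb He. apply NNPP; intro Hfg.
  exact (proj1 (proj2 Hc) f g a b Hfg Ha Hb He).
Qed.

Lemma eval_head_type_inv g h T f a :
  wf_head E h -> length a = farity E f ->
  eval_head E g h = FType T (VIri (finterp E f a)) ->
  exists ys, h = HType T (TFun f ys).
Proof.
  intros Hh Ha He.
  destruct h as [t1 p t2 | T' [x | f' ys] | t]; simpl in He; try discriminate.
  injection He as -> Hf. exists ys.
  destruct Hh as [Hl _].
  rewrite (finterp_constructor_inj f' f (map g ys) a); [reflexivity | | exact Ha | exact Hf].
  now rewrite length_map.
Qed.

Lemma eval_head_triple_inv g h a p f b :
  wf_head E h -> length b = farity E f ->
  eval_head E g h = FTriple a p (VIri (finterp E f b)) ->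
  exists f0 xs ys, h = HTriple (TFun f0 xs) p (TFun f ys) /\
    a = VIri (finterp E f0 (map g xs)) /\ length xs = farity E f0.
Proof.
  intros Hh Hb He.
  destruct h as [[x | f0 xs] p' [y | f' ys] | T t | t];
    simpl in Hh, He; try discriminate; try (destruct Hh as [_ [_ Hfun]]; contradiction).
  injection He as <- <- Hf.
  destruct Hh as [Hxs [Hys _]].
  assert (f' = f) as ->.
  { apply (finterp_constructor_inj f' f (map g ys) b); [now rewrite length_map | exact Hb | exact Hf]. }
  exists f0, xs, ys. auto.
Qed.

Lemma core_presol_triple_inv {I : instance E} {a p b} :
  core_presol I (FTriple a p b) ->
  exists s g, In s (stgds E) /\ eval_head E g (Defs.head s) = FTriple a p b.
Proof. intro H. inversion H as [s g Hs _ He | | ]. eauto. Qed.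

Lemma core_presol_type_accessible {I : instance E} {F} :
  core_presol I F -> forall T f a, F = FType T (VIri (finterp E f a)) ->
  length a = farity E f -> accessible E T f.
Proof.
  induction 1 as [s g Hs _ | T0 b0 p b S mu _ IHtype Htriple _ Hdelta | T1 a1 p1 b1 mu1 _ _ _ _ _];
    intros T f a HF Ha; try discriminate.
  - destruct (eval_head_type_inv g _ T f a (wf_setting_head Hwf Hs) Ha HF) as [ys Hh].
    exact (acc_base E s Hs Hh).
  - injection HF as -> ->.
    destruct (core_presol_triple_inv Htriple) as [s [g [Hs He]]].
    destruct (eval_head_triple_inv g _ b0 p f a (wf_setting_head Hwf Hs) Ha He)
      as [f0 [xs [ys [Hh [-> Hxs]]]]].
    apply (acc_step s (IHtype T0 f0 (map g xs) eq_refl ltac:(now rewrite length_map))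
             Hs Hh Hdelta).
Qed.

End Soundness.

Section Completeness.
Context {E : setting}.
Hypothesis Hwf : wf_setting E.
Variable c : Lit E.

Definition const_instance : instance E :=
  mkInstance (fun R => [repeat c (rarity E R)]).

Lemma const_instance_wf : ~ NullLit E c -> wf_instance const_instance.
Proof.
  intros Hc_nonnull R t [<- | []]. split.
  - apply repeat_length.
  - now apply Forall_repeat.
Qed.

Lemma const_instance_triggers {s} :
  In s (stgds E) -> body_true const_instance (fun _ => c) (body s).
Proof.
  intros Hs A HA. left.
  now rewrite map_const, (wf_setting_body Hwf Hs HA).
Qed.

Lemma accessible_const_presol {T f} :
  accessible E T f ->
  core_presol const_instance (FType T (VIri (finterp E f (repeat c (farity E f))))).
Proof.
  induction 1 as [s T f ys Hs Hh | s T f xs p T' f' ys mu _ IH Hs Hh Hdelta];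
    pose proof (cp_tgd s Hs (const_instance_triggers Hs)) as Hfired;
    pose proof (wf_setting_head Hwf Hs) as Hwfh;
    rewrite Hh in Hfired, Hwfh; simpl in Hfired, Hwfh.
  - destruct Hwfh as [Hys _].
    now rewrite map_const, Hys in Hfired.
  - destruct Hwfh as [Hxs [Hys _]].
    rewrite !map_const, Hxs, Hys in Hfired.
    exact (cp_type IH Hfired Hdelta).
Qed.

Lemma const_instance_adom (Hc : constructive E) {s x} :
  In s (stgds E) -> In x (head_vars E (Defs.head s)) -> adom const_instance c.
Proof.
  intros Hs Hx.
  destruct (proj2 (proj2 Hc) s Hs x Hx) as [A [HA HxA]].
  exists (fst A), (repeat c (rarity E (fst A))). split; [now left |].
  rewrite <- (wf_setting_body Hwf Hs HA).
  destruct (snd A); [destruct HxA | now left].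
Qed.

Lemma accessible_head_vars {T f} :
  accessible E T f ->
  exists s ys, In s (stgds E) /\ length ys = farity E f /\
    incl ys (head_vars E (Defs.head s)).
Proof.
  destruct 1 as [s T f ys Hs Hh | s T f xs p T' f' ys mu _ Hs Hh _];
    exists s, ys; pose proof (wf_setting_head Hwf Hs) as Hwfh;
    rewrite Hh in Hwfh |- *; simpl in Hwfh |- *.
  - split; [exact Hs | split; [apply Hwfh | apply incl_refl]].
  - split; [exact Hs | split; [apply Hwfh | apply incl_appr, incl_refl]].
Qed.

Lemma accessible_const_args_adom (Hc : constructive E) {T f} :
  accessible E T f -> Forall (adom const_instance) (repeat c (farity E f)).
Proof.
  intro Hacc.
  destruct (accessible_head_vars Hacc) as [s [[| y ys] [Hs [Hl Hincl]]]];
    rewrite <- Hl; [constructor |].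
  apply Forall_repeat.
  exact (const_instance_adom Hc Hs (Hincl y (or_introl eq_refl))).
Qed.

End Completeness.

Theorem lemma1 (E : setting) (Hc : constructive E) (Hwf : wf_setting E)
    (T : TName E) (f : FName E) :
  accessible E T f <->
  exists (I : instance E) (a : list (Lit E)),
    wf_instance I /\
    length a = farity E f /\
    Forall (fun l => ~ NullLit E l /\ adom I l) a /\
    core_presol I (FType T (VIri (finterp E f a))).
Proof.
  split.
  - intro Hacc. destruct (proj1 Hwf) as [c Hc_nonnull].
    exists (const_instance c), (repeat c (farity E f)).
    split; [exact (const_instance_wf c Hc_nonnull) |].
    split; [apply repeat_length |].
    split; [| exact (accessible_const_presol Hwf c Hacc)].
    apply Forall_and; [| exact (accessible_const_args_adom Hwf c Hc Hacc)].
    now apply Forall_repeat.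
  - intros [I [a [_ [Ha [_ Hpresol]]]]].
    exact (core_presol_type_accessible Hc Hwf Hpresol T f a eq_refl Ha).
Qed.
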